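(* For the triangle query $Q=R(A,B)\bowtie S(B,C)\bowtie T(C,A)$ with $|R|,|S|,|T|\le IN$, there is a vertex-centric BSP algorithm on $\mathrm{TAG}(D)$ that computes $Q(D)$ with total communication cost and total computation cost $O(IN^{3/2})$.
   Context: Vertex-centric BSP model: computation runs on a graph in which every vertex acts as a processor holding a local state, its incident edges and an incoming message queue. Computation proceeds in supersteps: in each superstep every active vertex reads the messages it received, performs local computation, and sends messages either along its incident edges or directly to any vertex whose identifier it knows (in particular to designated global aggregator vertices whose identifiers are known to all vertices); a synchronization barrier follows. Messages sent in superstep $i$ are delivered at the start of superstep $i+1$, and only vertices that received a message are active in superstep $i+1$. The computation ends when no messages are sent; its output is the union of the values output by the vertices. Total communication cost is the total amount of data sent in messages over all vertices and supersteps (a message carrying a vertex identifier or a constant number of attribute values counts $O(1)$; a message carrying a set of tuples counts the number of tuples). Total computation cost is the total number of elementary operations performed by all vertices over all supersteps. All complexities are data complexities: the query and schema are fixed and constants may depend on them. TAG encoding: for a relational database $D$, $\mathrm{TAG}(D)$ is the undirected bipartite graph with vertex and edge labels having (1) one tuple vertex $v_t$ labeled $R$ for each occurrence of a tuple $t$ in relation $R$ (duplicate occurrences get distinct vertices), storing $t$; (2) exactly one attribute vertex $v_a$ for each value $a$ of the active domain of $D$, regardless of how many times and in which attributes $a$ occurs; (3) for each occurrence of an $R$-tuple $t$ whose attribute $A$ has value $a$, an edge between $v_t$ and $v_a$ labeled $R.A$. Messages may be sent along an edge in either direction. *)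

From Stdlib Require Import List Arith PeanoNat Bool.
Import ListNotations.

(* Data values are natural numbers; relations are bags (lists) so that   *)
(* duplicate occurrences are distinct tuple occurrences.                 *)
Record db := mkDB { dbR : list (nat * nat);    (* R(A,B) *)
                    dbS : list (nat * nat);    (* S(B,C) *)
                    dbT : list (nat * nat) }.  (* T(C,A) *)

Definition in_Q (D : db) (a b c : nat) : Prop :=
  In (a, b) (dbR D) /\ In (b, c) (dbS D) /\ In (c, a) (dbT D).

Inductive lab :=
| LR | LS | LT                             (* tuple-vertex labels          *)
| LRA | LRB | LSB | LSC | LTC | LTA        (* edge labels  R.A, R.B, ...   *)
| LAttr | LAgg.                           (* attribute / aggregator kinds *)

Inductive vid := VAttr (a : nat) | VTup (i : nat) | VAgg (k : nat).

(* The atomic contents of registers and messages.  Programs can only test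
   atoms for equality (and compare / add / multiply [ANat] counters). *)
Inductive atom := AData (a : nat) | AVid (v : vid) | ANat (n : nat) | ALab (l : lab).

Definition atom_eq_dec (x y : atom) : {x = y} + {x <> y}.
Proof. repeat decide equality. Defined.
Definition atom_eqb (x y : atom) : bool := if atom_eq_dec x y then true else false.

Fixpoint atoms_eqb (x y : list atom) : bool :=
  match x, y with
  | [], [] => true
  | a :: x', b :: y' => atom_eqb a b && atoms_eqb x' y'
  | _, _ => false
  end.

(* Registers and tables are indexed by nat.  Tuples (keys, table values, *)
(* messages, outputs) are lists of registers written in the program, so *)
(* their arity is a constant fixed by the program.  Tables are hash     *)
(* multimaps from keys to bags of tuples with O(1) insert / membership  *)
(* / count, and iteration costing 1 per element.                       *)
Inductive expr :=
| EReg (r : nat)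
| ENat (n : nat)
| ELab (l : lab)
| EAgg (k : nat)
| ESelf
| EKind
| EField (i : nat)
| EAdd (e1 e2 : expr)
| EMul (e1 e2 : expr)
| ECount (t : nat) (key : list nat).

Inductive cond :=
| CTrue
| CEq (e1 e2 : expr)
| CLe (e1 e2 : expr)
| CMem (t : nat) (key : list nat)
| CNot (c : cond)
| CAnd (c1 c2 : cond).

Inductive stmt :=
| SSkip
| SSeq (s1 s2 : stmt)
| SAssign (r : nat) (e : expr)
| SIf (c : cond) (s1 s2 : stmt)
| SInsert (t : nat) (key vals : list nat)
| SSend (dest : nat) (msg : list nat)      (* send tuple of registers to the
                                              vertex whose id is in [dest] *)
| SOutput (tup : list nat)
| SForInbox (rs : list nat) (body : stmt)  (* bind fields of each message *)
| SForEdges (rl rn : nat) (body : stmt)    (* bind edge label / neighbour id *)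
| SForVals (t : nat) (key : list nat) (rs : list nat) (body : stmt)
| SForKeys (t : nat) (rs : list nat) (body : stmt).

Fixpoint esize (e : expr) : nat :=
  match e with
  | EAdd e1 e2 | EMul e1 e2 => S (esize e1 + esize e2)
  | ECount _ k => S (length k)
  | _ => 1
  end.

Fixpoint csize (c : cond) : nat :=
  match c with
  | CEq e1 e2 | CLe e1 e2 => S (esize e1 + esize e2)
  | CMem _ k => S (length k)
  | CNot c => S (csize c)
  | CAnd c1 c2 => S (csize c1 + csize c2)
  | CTrue => 1
  end.

(* local state: registers and tables (persistent across supersteps) *)
Definition table := list (list atom * list (list atom)).
Record lstate := mkL { regs : nat -> atom; tabs : nat -> table }.

Definition init_lstate : lstate := mkL (fun _ => ANat 0) (fun _ => []).

Record vinfo := mkV { vself : vid; vkind : lab; vfields : list nat;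
                      vedges : list (lab * vid) }.

Fixpoint tlookup (tb : table) (k : list atom) : list (list atom) :=
  match tb with
  | [] => []
  | (k', vs) :: tb' => if atoms_eqb k k' then vs else tlookup tb' k
  end.

Fixpoint tinsert (tb : table) (k : list atom) (v : list atom) : table :=
  match tb with
  | [] => [(k, [v])]
  | (k', vs) :: tb' =>
      if atoms_eqb k k' then (k', vs ++ [v]) :: tb' else (k', vs) :: tinsert tb' k v
  end.

Definition nat_of_atom (a : atom) : option nat :=
  match a with ANat n => Some n | _ => None end.

Fixpoint evale (V : vinfo) (st : lstate) (e : expr) : atom :=
  match e with
  | EReg r => regs st r
  | ENat n => ANat n
  | ELab l => ALab l
  | EAgg k => AVid (VAgg k)
  | ESelf => AVid (vself V)
  | EKind => ALab (vkind V)
  | EField i => match nth_error (vfields V) i with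
                | Some a => AData a | None => ANat 0 end
  | EAdd e1 e2 => match nat_of_atom (evale V st e1), nat_of_atom (evale V st e2) with
                  | Some x, Some y => ANat (x + y) | _, _ => ANat 0 end
  | EMul e1 e2 => match nat_of_atom (evale V st e1), nat_of_atom (evale V st e2) with
                  | Some x, Some y => ANat (x * y) | _, _ => ANat 0 end
  | ECount t k => ANat (length (tlookup (tabs st t) (map (regs st) k)))
  end.

Fixpoint evalc (V : vinfo) (st : lstate) (c : cond) : bool :=
  match c with
  | CTrue => true
  | CEq e1 e2 => atom_eqb (evale V st e1) (evale V st e2)
  | CLe e1 e2 => match nat_of_atom (evale V st e1), nat_of_atom (evale V st e2) with
                 | Some x, Some y => Nat.leb x y | _, _ => false end
  | CMem t k => existsb (fun kv => atoms_eqb (map (regs st) k) (fst kv)) (tabs st t)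
  | CNot c => negb (evalc V st c)
  | CAnd c1 c2 => evalc V st c1 && evalc V st c2
  end.

Definition setreg (st : lstate) (r : nat) (a : atom) : lstate :=
  mkL (fun r' => if Nat.eqb r' r then a else regs st r') (tabs st).

Fixpoint setregs (st : lstate) (rs : list nat) (m : list atom) : lstate :=
  match rs with
  | [] => st
  | r :: rs' => setregs (setreg st r (nth 0 m (ANat 0))) rs' (tl m)
  end.

Record acc := mkAcc { ast : lstate; asent : list (atom * list atom);
                      aout : list (list atom); acost : nat }.

Definition charge (n : nat) (a : acc) : acc :=
  mkAcc (ast a) (asent a) (aout a) (acost a + n).
Definition with_st (st : lstate) (a : acc) : acc :=
  mkAcc st (asent a) (aout a) (acost a).

Fixpoint exec (V : vinfo) (inbox : list (list atom)) (s : stmt) (a : acc) : acc :=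
  match s with
  | SSkip => charge 1 a
  | SSeq s1 s2 => exec V inbox s2 (exec V inbox s1 a)
  | SAssign r e =>
      charge (S (esize e)) (with_st (setreg (ast a) r (evale V (ast a) e)) a)
  | SIf c s1 s2 =>
      let a' := charge (S (csize c)) a in
      if evalc V (ast a) c then exec V inbox s1 a' else exec V inbox s2 a'
  | SInsert t k vs =>
      let st := ast a in
      let st' := mkL (regs st)
                   (fun t' => if Nat.eqb t' t
                              then tinsert (tabs st t) (map (regs st) k) (map (regs st) vs)
                              else tabs st t') in
      charge (S (length k + length vs)) (with_st st' a)
  | SSend d m =>
      let st := ast a in
      mkAcc st (asent a ++ [(regs st d, map (regs st) m)]) (aout a)
            (acost a + S (length m))
  | SOutput tp =>
      let st := ast a in
      mkAcc st (asent a) (aout a ++ [map (regs st) tp]) (acost a + S (length tp))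
  | SForInbox rs b =>
      fold_left (fun a0 m => exec V inbox b
                   (charge (S (length rs)) (with_st (setregs (ast a0) rs m) a0)))
                inbox (charge 1 a)
  | SForEdges rl rn b =>
      fold_left (fun a0 ed => exec V inbox b
                   (charge 3 (with_st (setreg (setreg (ast a0) rl (ALab (fst ed)))
                                                rn (AVid (snd ed))) a0)))
                (vedges V) (charge 1 a)
  | SForVals t k rs b =>
      fold_left (fun a0 m => exec V inbox b
                   (charge (S (length rs)) (with_st (setregs (ast a0) rs m) a0)))
                (tlookup (tabs (ast a) t) (map (regs (ast a)) k))
                (charge (S (length k)) a)
  | SForKeys t rs b =>
      fold_left (fun a0 m => exec V inbox b
                   (charge (S (length rs)) (with_st (setregs (ast a0) rs m) a0)))
                (map fst (tabs (ast a) t)) (charge 1 a)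
  end.

(* A vertex-centric program: a fixed number of global aggregator vertices
   and one local program run by every active vertex in every superstep. *)
Record program := mkProg { nagg : nat; pbody : stmt }.

(* Tuple vertices: R-occurrences numbered 0..|R|-1, then S, then T.      *)
Definition tuple_vertices (D : db) : list vinfo :=
  let nR := length (dbR D) in
  let nS := length (dbS D) in
  map (fun ip => let '(i, (a, b)) := ip in
                 mkV (VTup i) LR [a; b] [(LRA, VAttr a); (LRB, VAttr b)])
      (combine (seq 0 nR) (dbR D)) ++
  map (fun ip => let '(i, (b, c)) := ip in
                 mkV (VTup (nR + i)) LS [b; c] [(LSB, VAttr b); (LSC, VAttr c)])
      (combine (seq 0 nS) (dbS D)) ++
  map (fun ip => let '(i, (c, a)) := ip in
                 mkV (VTup (nR + nS + i)) LT [c; a] [(LTC, VAttr c); (LTA, VAttr a)])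
      (combine (seq 0 (length (dbT D))) (dbT D)).

Definition tag_edges (D : db) : list (vid * lab * nat) :=
  flat_map (fun v => map (fun e => (vself v, fst e,
                                    match snd e with VAttr a => a | _ => 0 end))
                         (vedges v))
           (tuple_vertices D).

Fixpoint nodup_nat (l : list nat) : list nat :=
  match l with
  | [] => []
  | x :: l' => if existsb (Nat.eqb x) l' then nodup_nat l' else x :: nodup_nat l'
  end.

Definition adom (D : db) : list nat :=
  nodup_nat (map (fun e => let '(_, _, a) := e in a) (tag_edges D)).

Definition attr_vertices (D : db) : list vinfo :=
  map (fun a => mkV (VAttr a) LAttr [a]
                  (flat_map (fun e => let '(t, l, a') := e in
                                      if Nat.eqb a a' then [(l, t)] else [])
                            (tag_edges D)))
      (adom D).

Definition agg_vertices (k : nat) : list vinfo :=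
  map (fun i => mkV (VAgg i) LAgg [] []) (seq 0 k).

Definition all_vertices (P : program) (D : db) : list vinfo :=
  tuple_vertices D ++ attr_vertices D ++ agg_vertices (nagg P).

Definition vid_eqb (v w : vid) : bool := atom_eqb (AVid v) (AVid w).

Definition inbox_of (v : vinfo) (msgs : list (atom * list atom)) : list (list atom) :=
  map snd (filter (fun m => atom_eqb (fst m) (AVid (vself v))) msgs).

Fixpoint superstep (P : program) (first : bool) (msgs : list (atom * list atom))
         (vs : list vinfo) (sts : list lstate)
  : list lstate * list (atom * list atom) * list (list atom) * nat :=
  match vs, sts with
  | v :: vs', st :: sts' =>
      let '(sts'', sent, outs, cost) := superstep P first msgs vs' sts' in
      let inb := inbox_of v msgs in
      if first || negb (match inb with [] => true | _ => false end) then
        let r := exec v inb (pbody P) (mkAcc st [] [] 0) in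
        (ast r :: sts'', asent r ++ sent, aout r ++ outs, acost r + cost)
      else (st :: sts'', sent, outs, cost)
  | _, _ => ([], [], [], 0)
  end.

(* Runs at most [fuel] supersteps; [Some (outputs, comm, comp)] if the
   computation ended (a superstep sent no message).  Every message carries a
   program-bounded number of atoms, so it costs 1 unit of communication. *)
Fixpoint run (fuel : nat) (P : program) (vs : list vinfo) (first : bool)
         (sts : list lstate) (msgs : list (atom * list atom))
  : option (list (list atom) * nat * nat) :=
  match fuel with
  | 0 => None
  | S f =>
      let '(sts', sent, outs, cost) := superstep P first msgs vs sts in
      match sent with
      | [] => Some (outs, 0, cost)
      | _ => match run f P vs false sts' sent with
             | Some (o, cm, cp) => Some (outs ++ o, length sent + cm, cost + cp)
             | None => None
             end
      end
  end.

Definition runs_on (P : program) (D : db) (outs : list (list atom)) (comm comp : nat) : Prop :=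
  exists fuel,
    let vs := all_vertices P D in
    run fuel P vs true (map (fun _ => init_lstate) vs) [] = Some (outs, comm, comp).

From Stdlib Require Import List Arith Lia Bool.
Import ListNotations.

(* Algorithm.  In superstep 1 every tuple vertex sends its labelled tuple to
   one aggregator vertex: [O(IN)] messages.  In superstep 2 the aggregator
   indexes [S] by [B] and [T] by [A] (bags of neighbours and membership
   tables), and then treats each distinct [R]-tuple [(a, b)] once: it scans
   the smaller of the bags [S(b, _)] and [T(_, a)] and tests the closing pair
   in the other relation.  Nothing more is sent, so the run stops.

   Cost.  All work is [O(IN)] except the scans, which cost
   [X = sum over distinct (a, b) in R of min (deg_S b) (deg_T a)].  Over
   distinct pairs, [sum deg_S b * deg_T a <= |S| * |T|]; with [k = sqrt IN]
   and [k * min x y <= k^2 + x * y] this gives [k * X <= 2 IN^2], hence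
   [X^2 <= 16 IN^3] ([min_degree_sum_bound]). *)

Lemma atom_eqb_spec x y : atom_eqb x y = true <-> x = y.
Proof. unfold atom_eqb; destruct (atom_eq_dec x y); split; congruence. Qed.

Lemma atoms_eqb_spec x y : atoms_eqb x y = true <-> x = y.
Proof.
  revert y; induction x as [|a x IH]; intros [|b y]; simpl; try (split; congruence).
  rewrite andb_true_iff, atom_eqb_spec, IH.
  split; [intros [-> ->]; reflexivity | intros H; injection H; auto].
Qed.

Lemma atoms_eqb_sym x y : atoms_eqb x y = atoms_eqb y x.
Proof. apply eq_true_iff_eq; rewrite !atoms_eqb_spec; split; auto. Qed.

Lemma atom_eqb_data a b : atom_eqb (AData a) (AData b) = (a =? b).
Proof.
  apply eq_true_iff_eq; rewrite atom_eqb_spec, Nat.eqb_eq.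
  split; [intros H; injection H | intros ->]; auto.
Qed.

Lemma atoms_eqb_data1 a b : atoms_eqb [AData a] [AData b] = (a =? b).
Proof. simpl; rewrite atom_eqb_data, andb_true_r; reflexivity. Qed.

Lemma atoms_eqb_data2 a b c d :
  atoms_eqb [AData a; AData b] [AData c; AData d] = (a =? c) && (b =? d).
Proof. simpl; rewrite !atom_eqb_data, andb_true_r; reflexivity. Qed.

Definition memb (tb : table) (k : list atom) : bool :=
  existsb (fun kv => atoms_eqb k (fst kv)) tb.

Lemma tlookup_tinsert tb k v k' :
  tlookup (tinsert tb k v) k' = tlookup tb k' ++ (if atoms_eqb k' k then [v] else []).
Proof.
  induction tb as [|[k0 vs] tb IH]; simpl.
  - destruct (atoms_eqb k' k); reflexivity.
  - destruct (atoms_eqb k k0) eqn:E; simpl.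
    + apply atoms_eqb_spec in E as ->.
      destruct (atoms_eqb k' k0); rewrite ?app_nil_r; reflexivity.
    + destruct (atoms_eqb k' k0) eqn:F; [|exact IH].
      apply atoms_eqb_spec in F as ->. rewrite atoms_eqb_sym, E, app_nil_r. reflexivity.
Qed.

Lemma memb_tinsert tb k v k' : memb (tinsert tb k v) k' = atoms_eqb k' k || memb tb k'.
Proof.
  unfold memb; induction tb as [|[k0 vs] tb IH]; simpl.
  - rewrite orb_false_r; reflexivity.
  - destruct (atoms_eqb k k0) eqn:E; simpl.
    + apply atoms_eqb_spec in E as ->. destruct (atoms_eqb k' k0); reflexivity.
    + rewrite IH. destruct (atoms_eqb k' k0), (atoms_eqb k' k); reflexivity.
Qed.

Lemma list_sum_map_add {A} (f g : A -> nat) L :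
  list_sum (map (fun p => f p + g p) L) = list_sum (map f L) + list_sum (map g L).
Proof. induction L as [|x L IH]; simpl; [reflexivity|]. rewrite IH; lia. Qed.

Lemma list_sum_map_le {A} (f g : A -> nat) L :
  (forall p, In p L -> f p <= g p) -> list_sum (map f L) <= list_sum (map g L).
Proof.
  induction L as [|x L IH]; simpl; intros H; [lia|].
  pose proof (H x (or_introl eq_refl)). specialize (IH (fun p Hp => H p (or_intror Hp))). lia.
Qed.

Lemma list_sum_map_const {A} (c : nat) (L : list A) :
  list_sum (map (fun _ => c) L) = length L * c.
Proof. induction L as [|x L IH]; simpl; lia. Qed.

Lemma list_sum_bound {A} (f : A -> nat) c l :
  (forall x, In x l -> f x <= c) -> list_sum (map f l) <= c * length l.
Proof.
  intros H. rewrite Nat.mul_comm, <- list_sum_map_const. apply list_sum_map_le; exact H.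
Qed.

Lemma map_snoc {A B} (f : A -> B) l x : map f (l ++ [x]) = map f l ++ [f x].
Proof. apply map_app. Qed.

Lemma flat_map_singleton {A B} (f : A -> list B) g l :
  (forall x, In x l -> f x = [g x]) -> flat_map f l = map g l.
Proof. induction l as [|x l IH]; simpl; intros H; [|rewrite H, IH]; auto. Qed.

Lemma flat_map_nil {A B} (f : A -> list B) l : (forall x, In x l -> f x = []) -> flat_map f l = [].
Proof. induction l as [|x l IH]; simpl; intros H; [|rewrite H, IH]; auto. Qed.

Lemma in_map_combine_seq {A B} (g : nat * A -> B) k l v :
  In v (map g (combine (seq k (length l)) l)) -> exists i x, v = g (i, x) /\ In x l.
Proof.
  revert k; induction l as [|x l IH]; intros k; simpl; [intros []|].
  intros [H|H]; [exists k, x; auto|]. destruct (IH (S k) H) as (i & y & -> & Hy); exists i, y; auto.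
Qed.

Lemma map_combine_seq {A B} (g : nat * A -> B) (f : A -> B) k l :
  (forall i x, g (i, x) = f x) -> map g (combine (seq k (length l)) l) = map f l.
Proof. intros H; revert k; induction l as [|x l IH]; intros k; simpl; [|rewrite H, IH]; reflexivity. Qed.

(* Successors of [b] in a binary relation [S] and predecessors of [a] in [T]
   (with multiplicities): their lengths are the degrees of the heavy/light
   analysis. *)
Definition succs (S : list (nat * nat)) (b : nat) : list nat :=
  map snd (filter (fun p => fst p =? b) S).
Definition preds (T : list (nat * nat)) (a : nat) : list nat :=
  map fst (filter (fun p => snd p =? a) T).

Lemma succs_app S1 S2 b : succs (S1 ++ S2) b = succs S1 b ++ succs S2 b.
Proof. unfold succs; rewrite filter_app, map_app; reflexivity. Qed.

Lemma preds_app T1 T2 a : preds (T1 ++ T2) a = preds T1 a ++ preds T2 a.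
Proof. unfold preds; rewrite filter_app, map_app; reflexivity. Qed.

Lemma in_succs S b c : In c (succs S b) <-> In (b, c) S.
Proof.
  unfold succs; rewrite in_map_iff. split.
  - intros ([b' c'] & <- & Hp). apply filter_In in Hp as [Hp Hb].
    apply Nat.eqb_eq in Hb; simpl in Hb; subst; exact Hp.
  - intros H; exists (b, c); split; [reflexivity|]. apply filter_In; simpl; rewrite Nat.eqb_refl; auto.
Qed.

Lemma in_preds T a c : In c (preds T a) <-> In (c, a) T.
Proof.
  unfold preds; rewrite in_map_iff. split.
  - intros ([c' a'] & <- & Hp). apply filter_In in Hp as [Hp Ha].
    apply Nat.eqb_eq in Ha; simpl in Ha; subst; exact Hp.
  - intros H; exists (c, a); split; [reflexivity|]. apply filter_In; simpl; rewrite Nat.eqb_refl; auto.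
Qed.

Lemma length_succs_cons s S b :
  length (succs (s :: S) b) = (if fst s =? b then 1 else 0) + length (succs S b).
Proof. unfold succs; simpl. destruct (fst s =? b); reflexivity. Qed.

Lemma length_preds_cons t T a :
  length (preds (t :: T) a) = (if snd t =? a then 1 else 0) + length (preds T a).
Proof. unfold preds; simpl. destruct (snd t =? a); reflexivity. Qed.

Definition pair_eq_dec (p q : nat * nat) : {p = q} + {p <> q}.
Proof. decide equality; apply Nat.eq_dec. Defined.

Lemma indicator_sum_le1 (L : list (nat * nat)) q : NoDup L ->
  list_sum (map (fun p => if pair_eq_dec p q then 1 else 0) L) <= 1.
Proof.
  intros HL. apply (NoDup_count_occ (pair_eq_dec)) with (x := q) in HL.
  enough (E : forall L', list_sum (map (fun p =>
            if pair_eq_dec p q then 1 else 0) L')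
          = count_occ (pair_eq_dec) L' q) by (rewrite E; exact HL).
  induction L' as [|p L' IH]; simpl; [reflexivity|]. rewrite IH. destruct (pair_eq_dec p q); reflexivity.
Qed.

(* For a fixed [b], the pairs [(a, b)] of a duplicate-free [L] have
   disjoint sets of [T]-predecessors of [a]. *)
Lemma sum_preds_bound (L T : list (nat * nat)) b : NoDup L ->
  list_sum (map (fun p => if snd p =? b then length (preds T (fst p)) else 0) L) <= length T.
Proof.
  intros HL; induction T as [|t T IH]; simpl.
  - clear HL; induction L as [|p L IHL]; simpl; [lia|].
    destruct (snd p =? b); simpl; lia.
  - assert (E : forall p, (if snd p =? b then length (preds (t :: T) (fst p)) else 0)
       = (if pair_eq_dec p (snd t, b) then 1 else 0)
         + (if snd p =? b then length (preds T (fst p)) else 0)).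
    { intros [p1 p2]; rewrite length_preds_cons; cbn [fst snd].
      destruct (pair_eq_dec (p1, p2) (snd t, b)) as [Ep|Ep].
      - injection Ep as -> ->. rewrite !Nat.eqb_refl. lia.
      - destruct (p2 =? b) eqn:E2; [|lia]. apply Nat.eqb_eq in E2 as ->.
        destruct (snd t =? p1) eqn:E1; [|lia]. apply Nat.eqb_eq in E1.
        exfalso; apply Ep; congruence. }
    rewrite (map_ext _ _ E), list_sum_map_add. pose proof (indicator_sum_le1 L (snd t, b) HL). lia.
Qed.

(* Summed over the distinct pairs [(a, b)] of [L], the products of the
   degrees of [b] in [S] and of [a] in [T] count distinct pairs of [S * T]. *)
Lemma sum_degree_products (L S T : list (nat * nat)) : NoDup L ->
  list_sum (map (fun p => length (succs S (snd p)) * length (preds T (fst p))) L)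
  <= length S * length T.
Proof.
  intros HL; induction S as [|s S IH]; simpl.
  - clear HL; induction L as [|p L IHL]; simpl; lia.
  - assert (E : forall p, length (succs (s :: S) (snd p)) * length (preds T (fst p))
       = (if snd p =? fst s then length (preds T (fst p)) else 0)
         + length (succs S (snd p)) * length (preds T (fst p))).
    { intros p; rewrite length_succs_cons, (Nat.eqb_sym (fst s)). destruct (snd p =? fst s); lia. }
    rewrite (map_ext _ _ E), list_sum_map_add. pose proof (sum_preds_bound L T (fst s) HL). lia.
Qed.

(* [k * min x y <= k^2 + x y]: compare the smaller degree with [k]. *)
Lemma min_le_split k x y : k * Nat.min x y <= k * k + x * y.
Proof.
  destruct (Nat.le_gt_cases x k).
  - assert (Nat.min x y <= x) by lia. nia.
  - assert (Nat.min x y <= y) by lia. nia.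
Qed.

(* Total cost of probing the pairs [(a, b)] of [L]: each pair pays the smaller
   of its two degrees. *)
Definition min_degree_sum (S T L : list (nat * nat)) : nat :=
  list_sum (map (fun p => Nat.min (length (succs S (snd p))) (length (preds T (fst p)))) L).

(* The heavy/light bound: each pair of [L] costs [min] of its two degrees;
   comparing both degrees to [k = sqrt IN] gives a total of [O(IN^{3/2})]. *)
Lemma min_degree_sum_bound (L S T : list (nat * nat)) IN :
  NoDup L -> length L <= IN -> length S <= IN -> length T <= IN -> 0 < IN ->
  min_degree_sum S T L * min_degree_sum S T L <= 16 * IN ^ 3.
Proof.
  intros HL HLn HS HT HIN. set (X := min_degree_sum S T L).
  set (k := Nat.sqrt IN).
  assert (Hk1 : k * k <= IN) by (apply Nat.sqrt_spec; lia).
  assert (Hk2 : IN < (k + 1) * (k + 1))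
    by (rewrite Nat.add_1_r; apply Nat.sqrt_spec; lia).
  assert (HkX : k * X <= 2 * IN * IN).
  { assert (k * X <= length L * (k * k) + length S * length T); [|nia].
    pose proof (sum_degree_products L S T HL) as Hprod.
    rewrite <- (list_sum_map_const (k * k) L).
    eapply Nat.le_trans; [|apply Nat.add_le_mono_l, Hprod]. rewrite <- list_sum_map_add.
    unfold X, min_degree_sum; clear. induction L as [|q L IH]; simpl; [lia|].
    pose proof (min_le_split k (length (succs S (snd q))) (length (preds T (fst q)))). lia. }
  assert (HIk : IN <= 4 * (k * k)) by (destruct k; nia).
  assert (Hsq : IN * (X * X) <= IN * (16 * IN ^ 3)).
  { assert (k * X * (k * X) <= (2 * IN * IN) * (2 * IN * IN)) by (apply Nat.mul_le_mono; exact HkX).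
    assert (IN * (X * X) <= 4 * (k * k) * (X * X)) by (apply Nat.mul_le_mono_r; exact HIk).
    simpl; nia. }
  apply Nat.mul_le_mono_pos_l in Hsq; assumption.
Qed.

(* Every message is a labelled pair [ALab l; AData x; AData y]
   bound to registers 1, 2, 3.  The aggregator keeps five tables: 0 maps [b]
   to the [c]'s with [S(b, c)]; 1 maps [a] to the [c]'s with [T(c, a)]; 2 and
   4 hold the pairs of [T] and of [S] for membership tests; 3 holds the
   [R]-tuples already probed.  Register 4 holds the value being probed. *)
Definition index_msg : stmt :=
  SIf (CEq (EReg 1) (ELab LS)) (SSeq (SInsert 0 [2] [3]) (SInsert 4 [2; 3] []))
    (SIf (CEq (EReg 1) (ELab LT)) (SSeq (SInsert 1 [3] [2]) (SInsert 2 [2; 3] [])) SSkip).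

Definition probe_test (t i j : nat) : stmt := SIf (CMem t [i; j]) (SOutput [2; 3; 4]) SSkip.

Definition probe : stmt :=
  SIf (CLe (ECount 0 [3]) (ECount 1 [2]))
    (SForVals 0 [3] [4] (probe_test 2 4 2))
    (SForVals 1 [2] [4] (probe_test 4 3 4)).

Definition join_msg : stmt :=
  SIf (CEq (EReg 1) (ELab LR))
    (SIf (CMem 3 [2; 3]) SSkip (SSeq (SInsert 3 [2; 3] []) probe)) SSkip.

Definition aggregate : stmt :=
  SSeq (SForInbox [1; 2; 3] index_msg) (SForInbox [1; 2; 3] join_msg).

Definition send_tuple : stmt :=
  SSeq (SAssign 0 (EAgg 0)) (SSeq (SAssign 1 EKind)
    (SSeq (SAssign 2 (EField 0)) (SSeq (SAssign 3 (EField 1)) (SSend 0 [1; 2; 3])))).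

Definition triangle_body : stmt :=
  SIf (CEq EKind (ELab LAgg)) aggregate (SIf (CEq EKind (ELab LAttr)) SSkip send_tuple).

Definition triangle_program : program := mkProg 1 triangle_body.

Definition aggregator : vinfo := mkV (VAgg 0) LAgg [] [].

Definition msg (m : lab * nat * nat) : list atom :=
  let '(l, x, y) := m in [ALab l; AData x; AData y].

Definition isR (l : lab) : bool := match l with LR => true | _ => false end.
Definition isS (l : lab) : bool := match l with LS => true | _ => false end.
Definition isT (l : lab) : bool := match l with LT => true | _ => false end.

Definition sel (p : lab -> bool) (ms : list (lab * nat * nat)) : list (nat * nat) :=
  flat_map (fun m => let '(l, x, y) := m in if p l then [(x, y)] else []) ms.

Lemma sel_cons p l x y ms :
  sel p ((l, x, y) :: ms) = (if p l then [(x, y)] else []) ++ sel p ms.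
Proof. reflexivity. Qed.

Lemma sel_app p ms1 ms2 : sel p (ms1 ++ ms2) = sel p ms1 ++ sel p ms2.
Proof. apply flat_map_app. Qed.

Lemma in_sel_cons p l x y ms q :
  In q (sel p ((l, x, y) :: ms)) <-> (p l = true /\ q = (x, y)) \/ In q (sel p ms).
Proof.
  rewrite sel_cons, in_app_iff. destruct (p l); simpl; intuition congruence.
Qed.

Definition singletons (cs : list nat) : list (list atom) := map (fun c => [AData c]) cs.

Definition index_step (V : vinfo) (inb : list (list atom)) (a : acc) (m : list atom) : acc :=
  exec V inb index_msg (charge 4 (with_st (setregs (ast a) [1; 2; 3] m) a)).

Lemma index_step_spec V inb a l x y :
  let a' := index_step V inb a (msg (l, x, y)) in
  asent a' = asent a /\ aout a' = aout a /\ acost a' <= acost a + 20 /\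
  tabs (ast a') 3 = tabs (ast a) 3 /\
  (forall b, tlookup (tabs (ast a') 0) [AData b] =
             tlookup (tabs (ast a) 0) [AData b] ++ singletons (succs (sel isS [(l, x, y)]) b)) /\
  (forall c, tlookup (tabs (ast a') 1) [AData c] =
             tlookup (tabs (ast a) 1) [AData c] ++ singletons (preds (sel isT [(l, x, y)]) c)) /\
  (forall c a0, memb (tabs (ast a') 2) [AData c; AData a0] = true <->
             memb (tabs (ast a) 2) [AData c; AData a0] = true \/ In (c, a0) (sel isT [(l, x, y)])) /\
  (forall b c, memb (tabs (ast a') 4) [AData b; AData c] = true <->
             memb (tabs (ast a) 4) [AData b; AData c] = true \/ In (b, c) (sel isS [(l, x, y)])).
Proof.
  destruct l; cbn -[memb tlookup tinsert];
    repeat match goal with |- _ /\ _ => split end; intros; rewrite ?app_nil_r;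
    try lia; try tauto.
  all: rewrite ?tlookup_tinsert, ?atoms_eqb_data1, ?memb_tinsert, ?atoms_eqb_data2.
  all: try (rewrite (Nat.eqb_sym x) || rewrite (Nat.eqb_sym y);
            destruct (_ =? _); reflexivity).
  all: rewrite orb_true_iff, andb_true_iff, !Nat.eqb_eq.
  all: split; [intros [[-> ->]|H]; auto | intros [H|[H|[]]]; [auto | injection H as -> ->; auto]].
Qed.

Lemma index_phase V inb ms : forall a0,
  let a1 := fold_left (index_step V inb) (map msg ms) a0 in
  asent a1 = asent a0 /\ aout a1 = aout a0 /\ acost a1 <= acost a0 + 20 * length ms /\
  tabs (ast a1) 3 = tabs (ast a0) 3 /\
  (forall b, tlookup (tabs (ast a1) 0) [AData b] =
             tlookup (tabs (ast a0) 0) [AData b] ++ singletons (succs (sel isS ms) b)) /\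
  (forall c, tlookup (tabs (ast a1) 1) [AData c] =
             tlookup (tabs (ast a0) 1) [AData c] ++ singletons (preds (sel isT ms) c)) /\
  (forall c a, memb (tabs (ast a1) 2) [AData c; AData a] = true <->
             memb (tabs (ast a0) 2) [AData c; AData a] = true \/ In (c, a) (sel isT ms)) /\
  (forall b c, memb (tabs (ast a1) 4) [AData b; AData c] = true <->
             memb (tabs (ast a0) 4) [AData b; AData c] = true \/ In (b, c) (sel isS ms)).
Proof.
  induction ms as [|[[l x] y] ms IH]; intros a0; cbn [map fold_left length].
  - unfold singletons, succs, preds; cbn; rewrite ?app_nil_r.
    repeat split; intros; rewrite ?app_nil_r; try lia; tauto.
  - destruct (index_step_spec V inb a0 l x y) as (E1 & E2 & E3 & E4 & E5 & E6 & E7 & E8).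
    destruct (IH (index_step V inb a0 (msg (l, x, y)))) as (F1 & F2 & F3 & F4 & F5 & F6 & F7 & F8).
    change ((l, x, y) :: ms) with ([(l, x, y)] ++ ms).
    unfold singletons in *; rewrite !sel_app.
    repeat split; intros.
    + congruence.
    + congruence.
    + lia.
    + congruence.
    + rewrite F5, E5, succs_app, map_app, app_assoc; reflexivity.
    + rewrite F6, E6, preds_app, map_app, app_assoc; reflexivity.
    + rewrite F7, E7, in_app_iff in *; tauto.
    + rewrite F7, E7, in_app_iff in *; tauto.
    + rewrite F8, E8, in_app_iff in *; tauto.
    + rewrite F8, E8, in_app_iff in *; tauto.
Qed.

Definition indexes (st : lstate) (S T : list (nat * nat)) : Prop :=
  (forall b, tlookup (tabs st 0) [AData b] = singletons (succs S b)) /\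
  (forall a, tlookup (tabs st 1) [AData a] = singletons (preds T a)) /\
  (forall c a, memb (tabs st 2) [AData c; AData a] = true <-> In (c, a) T) /\
  (forall b c, memb (tabs st 4) [AData b; AData c] = true <-> In (b, c) S).

Lemma indexes_tabs st st' S T :
  (forall t, t <> 3 -> tabs st' t = tabs st t) -> indexes st S T -> indexes st' S T.
Proof. intros E; unfold indexes; rewrite !E by discriminate; exact (fun H => H). Qed.

Definition probe_step V inb t i j (a : acc) (m : list atom) : acc :=
  exec V inb (probe_test t i j) (charge 2 (with_st (setregs (ast a) [4] m) a)).

Definition probe_reg (st : lstate) (c : nat) (r : nat) : atom :=
  if r =? 4 then AData c else regs st r.

Lemma probe_reg_setreg st c c' r : probe_reg (setreg st 4 c') c r = probe_reg st c r.
Proof. unfold probe_reg, setreg; simpl. destruct (r =? 4); reflexivity. Qed.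

Lemma probe_step_spec V inb t i j a c :
  probe_step V inb t i j a [AData c] =
  let st' := setreg (ast a) 4 (AData c) in
  if memb (tabs (ast a) t) [probe_reg (ast a) c i; probe_reg (ast a) c j]
  then mkAcc st' (asent a) (aout a ++ [[regs (ast a) 2; regs (ast a) 3; AData c]]) (acost a + 10)
  else mkAcc st' (asent a) (aout a) (acost a + 7).
Proof.
  unfold probe_step, probe_test, memb, probe_reg; simpl.
  destruct (existsb _ _); unfold charge, with_st; simpl; f_equal; lia.
Qed.

Lemma probe_loop V inb t i j cs : forall a0,
  let a1 := fold_left (probe_step V inb t i j) (singletons cs) a0 in
  asent a1 = asent a0 /\ tabs (ast a1) = tabs (ast a0) /\
  (forall r, r <> 4 -> regs (ast a1) r = regs (ast a0) r) /\
  acost a1 <= acost a0 + 10 * length cs /\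
  (forall o, In o (aout a1) <-> In o (aout a0) \/
     exists c, In c cs /\ memb (tabs (ast a0) t) [probe_reg (ast a0) c i; probe_reg (ast a0) c j] = true /\
               o = [regs (ast a0) 2; regs (ast a0) 3; AData c]).
Proof.
  induction cs as [|c cs IH]; intros a0; cbn [singletons map fold_left length].
  - repeat split; try lia.
    + auto.
    + intros [H|(c & [] & _)]; exact H.
  - destruct (IH (probe_step V inb t i j a0 [AData c])) as (H1 & H2 & H3 & H4 & H5).
    unfold singletons in *. rewrite probe_step_spec in H1, H2, H3, H4, H5 |- *. cbv zeta in *.
    assert (Hr : forall r, r <> 4 -> regs (setreg (ast a0) 4 (AData c)) r = regs (ast a0) r)
      by (intros r Hr; unfold setreg; simpl; apply Nat.eqb_neq in Hr; rewrite Hr; reflexivity).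
    destruct (memb (tabs (ast a0) t) [probe_reg (ast a0) c i; probe_reg (ast a0) c j]) eqn:Em;
      simpl in H1, H2, H3, H4, H5; setoid_rewrite probe_reg_setreg in H5;
      rewrite ?Hr in H5 by discriminate;
      (repeat split; [exact H1 | exact H2 | intros r Hr4; rewrite H3 by exact Hr4; apply Hr, Hr4 | lia | |]).
    + rewrite H5, in_app_iff; simpl. intros [[H|[H|[]]]|(c' & Hc & Hm & Ho)]; auto.
      * right; exists c; split; [left; reflexivity | split; [exact Em | symmetry; exact H]].
      * right; exists c'; auto.
    + rewrite H5, in_app_iff; simpl. intros [H|(c' & [<-|Hc] & Hm & Ho)].
      * left; left; exact H.
      * left; right; left; symmetry; exact Ho.
      * right; exists c'; auto.
    + rewrite H5. intros [H|(c' & Hc & Hm & Ho)]; [left; exact H|].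
      right; exists c'; split; [right; exact Hc | auto].
    + rewrite H5. intros [H|(c' & [<-|Hc] & Hm & Ho)].
      * left; exact H.
      * congruence.
      * right; exists c'; auto.
Qed.

Lemma probe_unfold V inb a :
  exec V inb probe a =
  if length (tlookup (tabs (ast a) 0) [regs (ast a) 3])
       <=? length (tlookup (tabs (ast a) 1) [regs (ast a) 2])
  then fold_left (probe_step V inb 2 4 2) (tlookup (tabs (ast a) 0) [regs (ast a) 3])
                 (charge 2 (charge 6 a))
  else fold_left (probe_step V inb 4 3 4) (tlookup (tabs (ast a) 1) [regs (ast a) 2])
                 (charge 2 (charge 6 a)).
Proof. reflexivity. Qed.

Lemma probe_spec V inb a S T x y :
  indexes (ast a) S T -> regs (ast a) 2 = AData x -> regs (ast a) 3 = AData y ->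
  let r := exec V inb probe a in
  asent r = asent a /\ tabs (ast r) = tabs (ast a) /\
  acost r <= acost a + 8 + 10 * Nat.min (length (succs S y)) (length (preds T x)) /\
  (forall o, In o (aout r) <-> In o (aout a) \/
     exists c, In (y, c) S /\ In (c, x) T /\ o = [AData x; AData y; AData c]).
Proof.
  intros (I0 & I1 & I2 & I4) Hx Hy. cbv zeta. rewrite probe_unfold, Hx, Hy, I0, I1.
  unfold singletons; rewrite !length_map.
  destruct (Nat.leb_spec (length (succs S y)) (length (preds T x))) as [Hle|Hlt].
  - destruct (probe_loop V inb 2 4 2 (succs S y) (charge 2 (charge 6 a))) as (K1 & K2 & _ & K4 & K5).
    cbn in K1, K2, K4, K5 |- *. unfold singletons, probe_reg in *; cbn in K5.
    rewrite Hx, Hy in K5. repeat split; [exact K1 | exact K2 | lia | |].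
    + intros Ho; apply K5 in Ho as [Ho|(c & Hc & Hm & ->)]; [left; exact Ho|].
      right; exists c. rewrite in_succs in Hc. rewrite I2 in Hm. auto.
    + intros Ho; apply K5. destruct Ho as [Ho|(c & HS & HT & ->)]; [left; exact Ho|].
      right; exists c. rewrite in_succs, I2. auto.
  - destruct (probe_loop V inb 4 3 4 (preds T x) (charge 2 (charge 6 a))) as (K1 & K2 & _ & K4 & K5).
    cbn in K1, K2, K4, K5 |- *. unfold singletons, probe_reg in *; cbn in K5.
    rewrite Hx, Hy in K5. repeat split; [exact K1 | exact K2 | lia | |].
    + intros Ho; apply K5 in Ho as [Ho|(c & Hc & Hm & ->)]; [left; exact Ho|].
      right; exists c. rewrite in_preds in Hc. rewrite I4 in Hm. auto.
    + intros Ho; apply K5. destruct Ho as [Ho|(c & HS & HT & ->)]; [left; exact Ho|].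
      right; exists c. rewrite in_preds, I4. auto.
Qed.

Definition join_step V inb (a : acc) (m : list atom) : acc :=
  exec V inb join_msg (charge 4 (with_st (setregs (ast a) [1; 2; 3] m) a)).

Lemma join_step_R V inb a x y :
  let st := setreg (setreg (setreg (ast a) 1 (ALab LR)) 2 (AData x)) 3 (AData y) in
  let a' := charge 4 (charge 4 (charge 4 (with_st st a))) in
  join_step V inb a (msg (LR, x, y)) =
  if memb (tabs (ast a) 3) [AData x; AData y]
  then charge 1 a'
  else exec V inb probe (charge 3 (with_st (mkL (regs st) (fun t => if t =? 3
         then tinsert (tabs (ast a) 3) [AData x; AData y] [] else tabs (ast a) t)) a')).
Proof. reflexivity. Qed.

Lemma join_step_spec V inb a S T l x y : indexes (ast a) S T ->
  let a' := join_step V inb a (msg (l, x, y)) in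
  asent a' = asent a /\ (forall t, t <> 3 -> tabs (ast a') t = tabs (ast a) t) /\
  if isR l && negb (memb (tabs (ast a) 3) [AData x; AData y]) then
    (forall k, memb (tabs (ast a') 3) k = atoms_eqb k [AData x; AData y] || memb (tabs (ast a) 3) k) /\
    (forall o, In o (aout a') <-> In o (aout a) \/
       exists c, In (y, c) S /\ In (c, x) T /\ o = [AData x; AData y; AData c]) /\
    acost a' <= acost a + 40 + 10 * Nat.min (length (succs S y)) (length (preds T x))
  else tabs (ast a') 3 = tabs (ast a) 3 /\ aout a' = aout a /\ acost a' <= acost a + 40.
Proof.
  intros HI. cbv zeta. destruct l; cbn [isR andb];
    try (unfold join_step; simpl; repeat split; lia).
  rewrite join_step_R. cbv zeta.
  destruct (memb (tabs (ast a) 3) [AData x; AData y]) eqn:Em; cbn [negb].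
  - simpl; repeat split; lia.
  - set (a0 := charge 3 _).
    assert (Hta : forall t, t <> 3 -> tabs (ast a0) t = tabs (ast a) t)
      by (intros t Ht; simpl; apply Nat.eqb_neq in Ht; rewrite Ht; reflexivity).
    destruct (probe_spec V inb a0 S T x y (indexes_tabs _ _ _ _ Hta HI) eq_refl eq_refl)
      as (J1 & J2 & J3 & J4).
    rewrite J1, J2. split; [reflexivity|]. split; [exact Hta|]. split; [|split].
    + intros k; simpl; apply memb_tinsert.
    + intros o; rewrite J4; reflexivity.
    + assert (acost a0 = acost a + 15) by (unfold a0; simpl; lia). lia.
Qed.

Lemma join_phase V inb S T ms : forall a0, indexes (ast a0) S T ->
  let a1 := fold_left (join_step V inb) (map msg ms) a0 in
  asent a1 = asent a0 /\
  (forall o, In o (aout a1) <-> In o (aout a0) \/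
     exists x y c, In (x, y) (sel isR ms) /\ memb (tabs (ast a0) 3) [AData x; AData y] = false /\
                   In (y, c) S /\ In (c, x) T /\ o = [AData x; AData y; AData c]) /\
  exists L, NoDup L /\
    (forall p, In p L -> In p (sel isR ms) /\
                         memb (tabs (ast a0) 3) [AData (fst p); AData (snd p)] = false) /\
    acost a1 <= acost a0 + 40 * length ms + 10 * min_degree_sum S T L.
Proof.
  induction ms as [|[[l x] y] ms IH]; intros a0 HI; cbn [map fold_left length].
  - split; [reflexivity|]. split.
    + intros o; split; [intros H; left; exact H | intros [H|(x & y & c & [] & _)]; exact H].
    + exists []; split; [constructor|]. split; [intros p []|]. unfold min_degree_sum; simpl; lia.
  - destruct (join_step_spec V inb a0 S T l x y HI) as (E1 & E2 & E3). cbv zeta in *.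
    set (a' := join_step V inb a0 (msg (l, x, y))) in *.
    destruct (IH a' (indexes_tabs _ _ _ _ E2 HI)) as (H1 & H2 & L & HL1 & HL2 & HL3).
    split; [congruence|].
    destruct (isR l && negb (memb (tabs (ast a0) 3) [AData x; AData y])) eqn:Eb.
    + apply andb_true_iff in Eb as [Hl Hm]. apply negb_true_iff in Hm.
      destruct E3 as (M3 & O3 & C3).
      assert (Hm' : forall x' y', memb (tabs (ast a') 3) [AData x'; AData y'] = false <->
                      (x', y') <> (x, y) /\ memb (tabs (ast a0) 3) [AData x'; AData y'] = false).
      { intros x' y'. rewrite M3, atoms_eqb_data2, orb_false_iff, andb_false_iff, !Nat.eqb_neq.
        split; [intros [H H']; split; [intros E; injection E as -> ->; destruct H; auto | exact H'] |].
        intros [H H']; split; [|exact H']. destruct (Nat.eq_dec x' x); [right|left]; congruence. }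
      split.
      * intros o; rewrite H2, O3. setoid_rewrite in_sel_cons. setoid_rewrite Hm'. split.
        -- intros [[H|(c & HS & HT & Ho)]|(x' & y' & c & Hi & (_ & Hm0) & HS & HT & Ho)];
             [left; exact H | right; exists x, y, c; auto | right; exists x', y', c; auto].
        -- intros [H|(x' & y' & c & [[_ Hxy]|Hi] & Hm0 & HS & HT & Ho)]; [left; left; exact H| |].
           ++ injection Hxy as -> ->. left; right; exists c; auto.
           ++ destruct (pair_eq_dec (x', y') (x, y)) as [Hxy|Hxy].
              ** injection Hxy as -> ->. left; right; exists c; auto.
              ** right; exists x', y', c; auto.
      * exists ((x, y) :: L). split; [|split].
        -- constructor; [|exact HL1]. intros Hin. apply HL2 in Hin as [_ Hin].
           apply Hm' in Hin as [Hin _]. apply Hin; reflexivity.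
        -- intros p [<-|Hp]; [rewrite in_sel_cons; auto|].
           destruct (HL2 p Hp) as [Hi Hn]. apply Hm' in Hn as [_ Hn]. rewrite in_sel_cons; auto.
        -- unfold min_degree_sum in *; simpl; lia.
    + destruct E3 as (T3 & O3 & C3). split.
      * intros o; rewrite H2, O3, T3. setoid_rewrite in_sel_cons. split.
        -- intros [H|(x' & y' & c & Hi & Hrest)]; [left; exact H | right; exists x', y', c; auto].
        -- intros [H|(x' & y' & c & [[Hl Hxy]|Hi] & Hm0 & Hrest)]; [left; exact H| |].
           ++ injection Hxy as -> ->. rewrite Hl, Hm0 in Eb; discriminate.
           ++ right; exists x', y', c; auto.
      * exists L. split; [exact HL1|]. split; [|lia].
        intros p Hp. rewrite T3 in HL2. destruct (HL2 p Hp). rewrite in_sel_cons; auto.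
Qed.

Lemma aggregate_unfold inb a :
  exec aggregator inb triangle_body a =
  fold_left (join_step aggregator inb) inb
    (charge 1 (fold_left (index_step aggregator inb) inb (charge 1 (charge 4 a)))).
Proof. reflexivity. Qed.

Lemma aggregator_run ms a :
  (forall t, tabs (ast a) t = []) -> asent a = [] -> aout a = [] ->
  let r := exec aggregator (map msg ms) triangle_body a in
  asent r = [] /\
  (forall o, In o (aout r) <-> exists x y c, o = [AData x; AData y; AData c] /\
     In (x, y) (sel isR ms) /\ In (y, c) (sel isS ms) /\ In (c, x) (sel isT ms)) /\
  exists L, NoDup L /\ incl L (sel isR ms) /\
    acost r <= acost a + 10 + 60 * length ms + 10 * min_degree_sum (sel isS ms) (sel isT ms) L.
Proof.
  intros Ht Hs Ho. cbv zeta. rewrite aggregate_unfold.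
  destruct (index_phase aggregator (map msg ms) ms (charge 1 (charge 4 a)))
    as (E1 & E2 & E3 & E4 & E5 & E6 & E7 & E8).
  cbv zeta in *. set (inb := map msg ms) in *.
  set (a1 := charge 1 (fold_left (index_step aggregator inb) inb (charge 1 (charge 4 a)))).
  assert (HI : indexes (ast a1) (sel isS ms) (sel isT ms)).
  { unfold indexes, a1; cbn [ast charge].
    split; [|split; [|split]]; intros.
    - rewrite E5, Ht; reflexivity.
    - rewrite E6, Ht; reflexivity.
    - rewrite E7, Ht. split; [intros [H|H]; [discriminate | exact H] | right; exact H].
    - rewrite E8, Ht. split; [intros [H|H]; [discriminate | exact H] | right; exact H]. }
  destruct (join_phase aggregator inb _ _ ms a1 HI) as (J1 & J2 & L & JL1 & JL2 & JL3).
  cbv zeta in *. change (map msg ms) with inb in J1, J2, JL3.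
  assert (Hseen : forall k, memb (tabs (ast a1) 3) k = false)
    by (intros k; unfold a1; cbn [ast charge]; rewrite E4, Ht; reflexivity).
  split; [|split].
  - rewrite J1; unfold a1; simpl; rewrite E1; exact Hs.
  - intros o. rewrite J2. unfold a1 at 1; simpl aout. rewrite E2. simpl; rewrite Ho. split.
    + intros [[]|(x & y & c & Hi & _ & HS & HT & ->)]. exists x, y, c; auto.
    + intros (x & y & c & -> & HR & HS & HT). right; exists x, y, c; auto.
  - exists L. split; [exact JL1|]. split; [intros p Hp; apply JL2, Hp|].
    assert (acost a1 <= acost a + 6 + 20 * length ms) by (unfold a1; simpl in E3 |- *; lia).
    lia.
Qed.

Definition tuple_msgs (D : db) : list (lab * nat * nat) :=
  map (fun p => (LR, fst p, snd p)) (dbR D) ++ map (fun p => (LS, fst p, snd p)) (dbS D)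
  ++ map (fun p => (LT, fst p, snd p)) (dbT D).

Lemma sel_labelled p l (P : list (nat * nat)) :
  sel p (map (fun q => (l, fst q, snd q)) P) = if p l then P else [].
Proof.
  induction P as [|[x y] P IH]; [destruct (p l); reflexivity|].
  cbn [map fst snd]. rewrite sel_cons, IH. destruct (p l); reflexivity.
Qed.

Lemma sel_tuple_msgs D :
  sel isR (tuple_msgs D) = dbR D /\ sel isS (tuple_msgs D) = dbS D /\
  sel isT (tuple_msgs D) = dbT D.
Proof.
  unfold tuple_msgs; rewrite !sel_app, !sel_labelled; simpl; rewrite !app_nil_r; auto.
Qed.

Lemma length_tuple_msgs D :
  length (tuple_msgs D) = length (dbR D) + length (dbS D) + length (dbT D).
Proof. unfold tuple_msgs; rewrite !length_app, !length_map; lia. Qed.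

Definition tuple_vertex (v : vinfo) : Prop :=
  exists i l x y l1 l2, v = mkV (VTup i) l [x; y] [(l1, VAttr x); (l2, VAttr y)] /\
                        (l = LR \/ l = LS \/ l = LT).
Definition attribute_vertex (v : vinfo) : Prop :=
  exists a es, v = mkV (VAttr a) LAttr [a] es.

Definition stored_pair (v : vinfo) : lab * nat * nat :=
  (vkind v, nth 0 (vfields v) 0, nth 1 (vfields v) 0).

Lemma tuple_vertices_shape D v : In v (tuple_vertices D) -> tuple_vertex v.
Proof.
  unfold tuple_vertices. rewrite !in_app_iff.
  intros [H|[H|H]]; apply in_map_combine_seq in H as (i & [x y] & -> & _);
    (do 6 eexists; split; [reflexivity | auto]).
Qed.

Lemma tuple_vertices_pairs D : map stored_pair (tuple_vertices D) = tuple_msgs D.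
Proof.
  unfold tuple_vertices, tuple_msgs. rewrite !map_app, !map_map.
  rewrite (map_combine_seq _ (fun p => (LR, fst p, snd p))),
    (map_combine_seq _ (fun p => (LS, fst p, snd p))),
    (map_combine_seq _ (fun p => (LT, fst p, snd p))); auto; intros i [x y]; reflexivity.
Qed.

Lemma length_tuple_vertices D : length (tuple_vertices D) = length (tuple_msgs D).
Proof. rewrite <- tuple_vertices_pairs, length_map; reflexivity. Qed.

Lemma attr_vertices_shape D v : In v (attr_vertices D) -> attribute_vertex v.
Proof. unfold attr_vertices. intros H; apply in_map_iff in H as (a & <- & _). do 2 eexists; reflexivity. Qed.

Lemma nodup_nat_length l : length (nodup_nat l) <= length l.
Proof. induction l as [|x l IH]; simpl; [lia|]. destruct (existsb _ _); simpl; lia. Qed.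

(* Each tuple has two attribute values, so there are at most twice as many
   attribute vertices as tuples. *)
Lemma length_attr_vertices D : length (attr_vertices D) <= 2 * length (tuple_msgs D).
Proof.
  unfold attr_vertices, adom. rewrite length_map. eapply Nat.le_trans; [apply nodup_nat_length|].
  rewrite length_map. unfold tag_edges. rewrite length_flat_map, <- length_tuple_vertices.
  apply (list_sum_bound _ 2). intros v Hv. apply tuple_vertices_shape in Hv as (i & l & x & y & l1 & l2 & -> & _).
  simpl; lia.
Qed.

Lemma all_vertices_triangle D :
  all_vertices triangle_program D = (tuple_vertices D ++ attr_vertices D) ++ [aggregator].
Proof. unfold all_vertices; rewrite app_assoc; reflexivity. Qed.

Definition first_round (P : program) (v : vinfo) : acc :=
  exec v [] (pbody P) (mkAcc init_lstate [] [] 0).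

Lemma superstep_first P vs :
  superstep P true [] vs (map (fun _ => init_lstate) vs) =
  (map (fun v => ast (first_round P v)) vs, flat_map (fun v => asent (first_round P v)) vs,
   flat_map (fun v => aout (first_round P v)) vs,
   list_sum (map (fun v => acost (first_round P v)) vs)).
Proof. induction vs as [|v vs IH]; simpl; [|rewrite IH]; reflexivity. Qed.

Lemma superstep_last_only P msgs vs sts v st :
  length sts = length vs -> (forall w, In w vs -> inbox_of w msgs = []) ->
  inbox_of v msgs <> [] ->
  let r := exec v (inbox_of v msgs) (pbody P) (mkAcc st [] [] 0) in
  superstep P false msgs (vs ++ [v]) (sts ++ [st]) = (sts ++ [ast r], asent r, aout r, acost r).
Proof.
  intros Hl Hw Hv. cbv zeta. revert sts Hl.
  induction vs as [|w vs IH]; intros [|s sts] Hl; simpl in Hl; try discriminate.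
  - simpl. destruct (inbox_of v msgs) as [|m ms] eqn:E; [congruence|].
    simpl; rewrite !app_nil_r, Nat.add_0_r; reflexivity.
  - rewrite <- !app_comm_cons. cbn [superstep].
    rewrite (IH (fun u Hu => Hw u (or_intror Hu)) sts ltac:(lia)), (Hw w (or_introl eq_refl)).
    reflexivity.
Qed.

Lemma run_two_supersteps P vs sts0 sts1 s1 s1s o1 c1 sts2 o2 c2 :
  superstep P true [] vs sts0 = (sts1, s1 :: s1s, o1, c1) ->
  superstep P false (s1 :: s1s) vs sts1 = (sts2, [], o2, c2) ->
  run 2 P vs true sts0 [] = Some (o1 ++ o2, length (s1 :: s1s), c1 + c2).
Proof. intros H1 H2. simpl. rewrite H1, H2, Nat.add_0_r. reflexivity. Qed.

Lemma run_one_superstep P vs sts0 sts1 o1 c1 :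
  superstep P true [] vs sts0 = (sts1, [], o1, c1) -> run 1 P vs true sts0 [] = Some (o1, 0, c1).
Proof. intros H1. simpl. rewrite H1. reflexivity. Qed.

Lemma first_round_tuple v : tuple_vertex v ->
  asent (first_round triangle_program v) = [(AVid (VAgg 0), msg (stored_pair v))] /\
  aout (first_round triangle_program v) = [] /\ acost (first_round triangle_program v) <= 40.
Proof. intros (i & l & x & y & l1 & l2 & -> & [->|[->| ->]]); simpl; repeat split; lia. Qed.

Lemma first_round_attribute v : attribute_vertex v ->
  asent (first_round triangle_program v) = [] /\
  aout (first_round triangle_program v) = [] /\ acost (first_round triangle_program v) <= 40.
Proof. intros (a & es & ->); simpl; repeat split; lia. Qed.

Lemma first_round_aggregator :
  asent (first_round triangle_program aggregator) = [] /\
  aout (first_round triangle_program aggregator) = [] /\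
  acost (first_round triangle_program aggregator) <= 40 /\
  (forall t, tabs (ast (first_round triangle_program aggregator)) t = []).
Proof. simpl; repeat split; lia. Qed.

Lemma inbox_of_aggregator L :
  inbox_of aggregator (map (fun m => (AVid (VAgg 0), msg m)) L) = map msg L.
Proof.
  unfold inbox_of. induction L as [|m L IH]; simpl; [reflexivity|]. f_equal; exact IH.
Qed.

Lemma inbox_of_other v L : (forall k, vself v <> VAgg k) ->
  inbox_of v (map (fun m => (AVid (VAgg 0), msg m)) L) = [].
Proof.
  intros H. unfold inbox_of. induction L as [|m L IH]; simpl; [reflexivity|].
  destruct (atom_eqb _ _) eqn:E; [|exact IH].
  apply atom_eqb_spec in E. exfalso; apply (H 0); congruence.
Qed.

Lemma first_superstep D :
  let vs := all_vertices triangle_program D in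
  flat_map (fun v => asent (first_round triangle_program v)) vs =
    map (fun m => (AVid (VAgg 0), msg m)) (tuple_msgs D) /\
  flat_map (fun v => aout (first_round triangle_program v)) vs = [] /\
  list_sum (map (fun v => acost (first_round triangle_program v)) vs)
    <= 40 * (3 * length (tuple_msgs D) + 1).
Proof.
  cbv zeta. rewrite all_vertices_triangle. split; [|split].
  - rewrite !flat_map_app.
    rewrite (flat_map_singleton _ (fun v => (AVid (VAgg 0), msg (stored_pair v))) (tuple_vertices D))
      by (intros v Hv; apply (first_round_tuple v (tuple_vertices_shape D v Hv))).
    rewrite (flat_map_nil _ (attr_vertices D))
      by (intros v Hv; apply (first_round_attribute v (attr_vertices_shape D v Hv))).
    cbn [flat_map]. rewrite (proj1 first_round_aggregator), <- tuple_vertices_pairs, map_map, !app_nil_r.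
    reflexivity.
  - apply flat_map_nil. intros v Hv. rewrite !in_app_iff in Hv.
    destruct Hv as [[Hv|Hv]|[<-|[]]].
    + apply (first_round_tuple v (tuple_vertices_shape D v Hv)).
    + apply (first_round_attribute v (attr_vertices_shape D v Hv)).
    + apply first_round_aggregator.
  - eapply Nat.le_trans; [apply (list_sum_bound _ 40)|].
    + intros v Hv. rewrite !in_app_iff in Hv. destruct Hv as [[Hv|Hv]|[<-|[]]].
      * apply (first_round_tuple v (tuple_vertices_shape D v Hv)).
      * apply (first_round_attribute v (attr_vertices_shape D v Hv)).
      * apply first_round_aggregator.
    + rewrite !length_app. pose proof (length_attr_vertices D). pose proof (length_tuple_vertices D).
      simpl; lia.
Qed.

Definition aggregator_start : acc :=
  mkAcc (ast (first_round triangle_program aggregator)) [] [] 0.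

Lemma second_superstep D : tuple_msgs D <> [] ->
  let r := exec aggregator (map msg (tuple_msgs D)) triangle_body aggregator_start in
  exists sts, superstep triangle_program false
                (map (fun m => (AVid (VAgg 0), msg m)) (tuple_msgs D)) (all_vertices triangle_program D)
                (map (fun v => ast (first_round triangle_program v)) (all_vertices triangle_program D))
              = (sts, asent r, aout r, acost r).
Proof.
  intros Hne. cbv zeta. rewrite all_vertices_triangle, map_snoc. eexists.
  rewrite superstep_last_only; [rewrite inbox_of_aggregator; reflexivity | apply length_map | |
                                rewrite inbox_of_aggregator; destruct (tuple_msgs D); easy].
  intros w Hw. apply inbox_of_other. rewrite in_app_iff in Hw. destruct Hw as [Hw|Hw].
  - apply tuple_vertices_shape in Hw as (i & l & x & y & l1 & l2 & -> & _); simpl; congruence.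
  - apply attr_vertices_shape in Hw as (a & es & ->); simpl; congruence.
Qed.

Lemma triangle_run D : exists outs comp L,
  runs_on triangle_program D outs (length (tuple_msgs D)) comp /\
  (forall o, In o outs <-> exists a b c, o = [AData a; AData b; AData c] /\ in_Q D a b c) /\
  NoDup L /\ incl L (dbR D) /\
  comp <= 200 * (length (tuple_msgs D) + 1) + 10 * min_degree_sum (dbS D) (dbT D) L.
Proof.
  pose proof (superstep_first triangle_program (all_vertices triangle_program D)) as E1.
  destruct (first_superstep D) as (Hsent & Hout & Hcost). cbv zeta in *.
  rewrite Hsent, Hout in E1. set (c1 := list_sum _) in E1, Hcost.
  pose proof (second_superstep D) as E2.
  destruct first_round_aggregator as (_ & _ & _ & Htabs).
  destruct (aggregator_run (tuple_msgs D) aggregator_start Htabs eq_refl eq_refl)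
    as (A1 & A2 & L & HL1 & HL2 & HL3).
  cbv zeta in E2, A1, A2, HL3.
  set (r := exec aggregator (map msg (tuple_msgs D)) triangle_body aggregator_start) in *.
  destruct (sel_tuple_msgs D) as (SR & SS & ST).
  destruct (tuple_msgs D) as [|m0 ms].
  - exists [], c1, []. split; [exists 1; exact (run_one_superstep _ _ _ _ _ _ E1)|].
    split; [|split; [constructor | split; [intros p [] | simpl in Hcost |- *; lia]]].
    intros o; split; [intros []|]. intros (a & b & c & _ & HR & _).
    rewrite <- SR in HR; destruct HR.
  - destruct (E2 ltac:(discriminate)) as [sts2 E2']. rewrite A1 in E2'.
    exists ([] ++ aout r), (c1 + acost r), L.
    split; [exists 2; rewrite <- (length_map (fun m => (AVid (VAgg 0), msg m)));
            exact (run_two_supersteps _ _ _ _ _ _ _ _ _ _ _ E1 E2')|].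
    split; [|split; [exact HL1 | split]].
    + intros o. rewrite app_nil_l, A2, SR, SS, ST. reflexivity.
    + intros p Hp; rewrite <- SR; apply HL2, Hp.
    + rewrite SS, ST in HL3. simpl in Hcost, HL3 |- *. lia.
Qed.

(* [(a + b)^2 <= 2 a^2 + 2 b^2] turns the two cost terms into [O(IN^3)]. *)
Lemma cost_square_bound IN n X :
  0 < IN -> X * X <= 16 * IN ^ 3 -> n <= 800 * IN + 10 * X -> n ^ 2 <= 2000 * 1000 * IN ^ 3.
Proof.
  intros HIN HX Hn.
  assert (Hsq : n * n <= 2 * ((800 * IN) * (800 * IN)) + 2 * ((10 * X) * (10 * X))).
  { assert (Hn2 : n * n <= (800 * IN + 10 * X) * (800 * IN + 10 * X))
      by (apply Nat.mul_le_mono; exact Hn).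
    assert (Hab : forall a b, 2 * a * b <= a * a + b * b).
    { intros a b; destruct (Nat.le_ge_cases a b) as [Hle|Hle];
        destruct (Nat.le_exists_sub _ _ Hle) as (d & -> & _); nia. }
    specialize (Hab (800 * IN) (10 * X)). lia. }
  assert (Hcube : IN * IN <= IN ^ 3) by (simpl; nia).
  rewrite Nat.pow_2_r. lia.
Qed.

Theorem mainTheorem5 :
  exists (P : program) (c : nat),
    forall (IN : nat) (D : db),
      0 < IN ->
      length (dbR D) <= IN -> length (dbS D) <= IN -> length (dbT D) <= IN ->
      exists (outs : list (list atom)) (comm comp : nat),
        runs_on P D outs comm comp /\
        (forall t, In t outs <->
                   exists a b c', t = [AData a; AData b; AData c'] /\ in_Q D a b c') /\
        comm ^ 2 <= c * IN ^ 3 /\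
        comp ^ 2 <= c * IN ^ 3.
Proof.
  exists triangle_program, (2000 * 1000). intros IN D HIN HR HS HT.
  destruct (triangle_run D) as (outs & comp & L & Hrun & Hout & HL & HLR & Hcomp).
  exists outs, (length (tuple_msgs D)), comp.
  split; [exact Hrun|]. split; [exact Hout|].
  pose proof (length_tuple_msgs D) as Hlen.
  assert (HLn : length L <= IN)
    by (eapply Nat.le_trans; [apply NoDup_incl_length; eassumption | exact HR]).
  pose proof (min_degree_sum_bound L (dbS D) (dbT D) IN HL HLn HS HT HIN) as HX.
  split; apply (cost_square_bound IN _ (min_degree_sum (dbS D) (dbT D) L)); auto; lia.
Qed.
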